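(* Let $\mathcal{P}=\langle P,\le\rangle$ be a finite bounded poset with $|P|\ge 2$, and let $R^+(\mathcal{P})$ be its interval rank poset. Then the width satisfies $\mathcal{W}(R^+(\mathcal{P}))\le\mathcal{W}(\mathcal{P})$.
   Context: A poset is bounded if it has a least and a greatest element. The height $H$ of a finite poset is the number of elements in its largest chain; the width $\mathcal{W}$ is the size of its largest antichain. For $a\in P$, $\uparrow a=\{b:b\ge a\}$ and $\downarrow a=\{b:b\le a\}$ as subposets. The standard interval rank is $R^+(a)=[H(\uparrow a)-1,\;H(\mathcal{P})-H(\downarrow a)]$. The interval rank poset $R^+(\mathcal{P})$ is the set $\{R^+(a):a\in P\}$ of intervals ordered by $\ge_W$, where $[x_*,x^*]\le_W[y_*,y^*]$ iff $x_*\le y_*$ and $x^*\le y^*$. *)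

From HB Require Import structures.
From mathcomp Require Import all_boot all_order.
Set Implicit Arguments. Unset Strict Implicit. Unset Printing Implicit Defensive.
Import Order.TTheory.

Section Generic.
Variables (T : finType) (le : rel T).

Definition is_chain (C : {set T}) : bool :=
  [forall x in C, forall y in C, le x y || le y x].

Definition is_antichain (A : {set T}) : bool :=
  [forall x in A, forall y in A, (x != y) ==> ~~ le x y].

Definition height_in (S : {set T}) : nat :=
  \max_(C : {set T} | (C \subset S) && is_chain C) #|C|.

Definition width : nat := \max_(A : {set T} | is_antichain A) #|A|.
End Generic.

Section PosetDefs.
Context {d : Order.disp_t} {T : finPOrderType d}.

Definition leT : rel T := fun x y => (x <= y)%O.

Definition height_of (S : {set T}) : nat := height_in leT S.
Definition up (a : T) : {set T} := [set b | (a <= b)%O].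
Definition down (a : T) : {set T} := [set b | (b <= a)%O].

Definition Rplus (a : T) : nat * nat :=
  (height_of (up a) - 1, height_of [set: T] - height_of (down a)).

Definition Rplus_carrier : seq (nat * nat) := undup [seq Rplus a | a <- enum T].
Definition RplusT : finType := seq_sub Rplus_carrier.

Definition leW (x y : nat * nat) : bool := (x.1 <= y.1) && (x.2 <= y.2).
Definition leR : rel RplusT := fun x y => leW (val x) (val y).

Definition width_Rplus : nat := width leR.
Definition width_P : nat := width leT.

Definition bounded : Prop :=
  (exists b : T, forall x : T, (b <= x)%O) /\ (exists t : T, forall x : T, (x <= t)%O).
End PosetDefs.

(* The interval rank R^+ is order-reversing, so it maps comparable elements of P
   to comparable intervals. Picking one preimage of every interval therefore
   sends an antichain of R^+(P) injectively onto an antichain of P. *)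

From mathcomp Require Import all_boot all_order.
Import Order.TTheory.

Lemma height_in_subset (U : finType) (le : rel U) (S S' : {set U}) :
  S \subset S' -> height_in le S <= height_in le S'.
Proof.
move=> sSS'; apply/bigmax_leqP => C /andP[sCS chainC].
apply: (leq_bigmax_cond (F := fun C : {set U} => #|C|)).
by rewrite chainC andbT (subset_trans sCS sSS').
Qed.

Lemma width_le_surj_antitone (U V : finType) (leU : rel U) (leV : rel V)
    (g : U -> V) :
  (forall v, exists u, g u = v) ->
  (forall u u', leU u u' -> leV (g u') (g u)) ->
  width leV <= width leU.
Proof.
move=> g_surj g_anti; have [f fK] := fin_all_exists g_surj.
apply/bigmax_leqP => A antiA.
have f_inj : {in A &, injective f} by move=> x y _ _ fxy; rewrite -[x]fK -[y]fK fxy.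
rewrite -(card_in_imset f_inj).
apply: (leq_bigmax_cond (F := fun C : {set U} => #|C|)).
apply/forallP => u; apply/implyP => /imsetP[x xA ->].
apply/forallP => v; apply/implyP => /imsetP[y yA ->].
apply/implyP => fx_neq_fy; apply/negP => /g_anti; rewrite !fK.
have y_neq_x : y != x by apply: contraNneq fx_neq_fy => ->.
move/forall_inP/(_ y yA)/forall_inP/(_ x xA): antiA.
by rewrite y_neq_x /= => /negP.
Qed.

Section IntervalRank.
Context {d : Order.disp_t} {T : finPOrderType d}.

Lemma Rplus_antitone (a b : T) : (a <= b)%O -> leW (Rplus b) (Rplus a).
Proof.
move=> le_ab; apply/andP; split.
- apply/leq_sub2r/height_in_subset/subsetP => x.
  by rewrite !inE => /(le_trans le_ab).
- apply/leq_sub2l/height_in_subset/subsetP => x.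
  by rewrite !inE => /le_trans; apply.
Qed.

Lemma Rplus_in_carrier (a : T) : Rplus a \in Rplus_carrier (T := T).
Proof. by rewrite mem_undup map_f ?mem_enum. Qed.

Definition Rplus_elem (a : T) : RplusT (T := T) := SeqSub (Rplus_in_carrier a).

Lemma Rplus_elem_surj (x : RplusT (T := T)) : exists a, Rplus_elem a = x.
Proof.
have := valP x; rewrite mem_undup => /mapP[a _ xE].
by exists a; apply: val_inj.
Qed.

End IntervalRank.

Theorem proposition6 (d : Order.disp_t) (T : finPOrderType d) :
  bounded (T := T) -> 2 <= #|T| ->
  width_Rplus (T := T) <= width_P (T := T).
Proof.
move=> _ _; apply: (@width_le_surj_antitone _ _ _ _ Rplus_elem).
- exact: Rplus_elem_surj.
- exact: Rplus_antitone.
Qed.
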